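(* Let $p$ be an odd prime, $S$ a symmetric multiset of elements of $\mathbb Z_p^n$, $G=\mathrm{Cay}(\mathbb Z_p^n,S)$, $S'=\biguplus_{k=1}^{(p-1)/2}kS$ (multiset union, $kS=\{ks:s\in S\}$), and $G'=\mathrm{Cay}(\mathbb Z_p^n,S')$. Then $$\phi(G)\le\phi(G')\le\frac{p+1}{4}\,\phi(G).$$
   Context: A multiset $S$ is symmetric if $x$ and $-x$ have equal multiplicity for all $x$. $\mathrm{Cay}(\Gamma,S)$ has vertex set $\Gamma$ and an edge $(v,v+s)$ for every $v$ and every element $s$ of $S$ (with multiplicity). For $Q\subseteq\Gamma$, $\partial Q$ is the multiset of edges $(i,j)$ with $i\in Q$, $j\notin Q$; $\phi_G(Q)=|\partial Q|/(|S||Q|)$ and $\phi(G)=\min\{\phi_G(Q):1\le|Q|\le|\Gamma|/2\}$. *)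

From HB Require Import structures.
From mathcomp Require Import all_boot all_order all_algebra.
Set Implicit Arguments. Unset Strict Implicit. Unset Printing Implicit Defensive.
Import Order.TTheory GRing.Theory Num.Theory.
Local Open Scope ring_scope.

(* A multiset of group elements is a sequence (order irrelevant). *)
Definition symmetric_ms (V : zmodType) (S : seq V) : Prop :=
  forall x : V, count_mem x S = count_mem (- x) S.

Definition edge_boundary (V : finZmodType) (S : seq V) (Q : {set V}) : nat :=
  \sum_(v in Q) count (fun s : V => (v + s)%R \notin Q) S.

Definition cond_set (V : finZmodType) (S : seq V) (Q : {set V}) : rat :=
  (edge_boundary S Q)%:R / (size S * #|Q|)%:R.

(* φ(G) = min { φ_G(Q) : 1 <= |Q| <= |Γ|/2 }.  All φ_G(Q) lie in [0,1],
   so 1 is a neutral element for this minimum. *)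
Definition cheeger (V : finZmodType) (S : seq V) : rat :=
  \big[Order.min/1]_(Q : {set V} | (0 < #|Q|)%N && (2 * #|Q| <= #|V|)%N)
     cond_set S Q.

Definition scale_ms (V : zmodType) (k : nat) (S : seq V) : seq V :=
  [seq s *+ k | s <- S].

Definition multi_ms (V : zmodType) (p : nat) (S : seq V) : seq V :=
  flatten [seq scale_ms k S | k <- iota 1 (p.-1)./2].

From HB Require Import structures.
From mathcomp Require Import all_boot all_order all_algebra.
From mathcomp Require Import zify.
Set Implicit Arguments. Unset Strict Implicit. Unset Printing Implicit Defensive.
Import Order.TTheory GRing.Theory Num.Theory.
Local Open Scope ring_scope.

(* Write m = (p-1)/2.  Since x |-> k x is an automorphism of Z_p^n for
   0 < k < p, the edges of Cay(Z_p^n, kS) leaving Q are those of Cay(Z_p^n, S)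
   leaving k^-1 Q, a set of the same size; hence phi_G'(Q) is the average over
   k of quantities each at least phi(G).  Conversely, an edge v -> v + k s
   leaving Q factors into k steps by s, one of which leaves Q, so
   |d_{kS} Q| <= k |d_S Q|, and averaging gives
   phi_G'(Q) <= (1 + ... + m)/m phi_G(Q) = (m+1)/2 phi_G(Q) = (p+1)/4 phi_G(Q). *)

Section EdgeBoundary.
Variable V : finZmodType.
Implicit Types (S : seq V) (Q : {set V}).

Definition edge_boundary1 Q (s : V) : nat :=
  \sum_(v in Q) nat_of_bool ((v + s)%R \notin Q).

Lemma edge_boundaryE S Q :
  edge_boundary S Q = (\sum_(s <- S) edge_boundary1 Q s)%N.
Proof.
rewrite /edge_boundary; elim: S => [|s S IH]; first by rewrite big_nil big1.
by rewrite big_cons -IH -big_split.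
Qed.

Lemma edge_boundary10 Q : edge_boundary1 Q 0 = 0%N.
Proof. by rewrite /edge_boundary1 big1 // => v vQ; rewrite addr0 vQ. Qed.

Lemma edge_boundary1D Q (a b : V) :
  (edge_boundary1 Q (a + b)%R <= edge_boundary1 Q a + edge_boundary1 Q b)%N.
Proof.
rewrite /edge_boundary1.
pose leave_b v := ((v + a)%R \in Q) && ((v + a + b)%R \notin Q).
have split_step : (\sum_(v in Q) nat_of_bool ((v + (a + b))%R \notin Q)
    <= \sum_(v in Q) (nat_of_bool ((v + a)%R \notin Q) + leave_b v))%N.
  apply: leq_sum => v _; rewrite /leave_b addrA.
  by case: (v + a \in Q); case: (v + a + b \in Q).
apply: leq_trans split_step _; rewrite big_split leq_add2l.
have drop_Q : (\sum_(v in Q) leave_b v <= \sum_v nat_of_bool (leave_b v))%N.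
  by rewrite [X in (_ <= X)%N](bigID (mem Q)) leq_addr.
apply: leq_trans drop_Q _.
rewrite (reindex (fun w => w - a)); last first.
  by exists (fun v => v + a) => x _; rewrite ?subrK ?addrK.
rewrite [X in (_ <= X)%N]big_mkcond; apply: leq_sum => w _.
by rewrite /leave_b subrK; case: (w \in Q).
Qed.

Lemma edge_boundary1Mn Q (s : V) k :
  (edge_boundary1 Q (s *+ k)%R <= k * edge_boundary1 Q s)%N.
Proof.
elim: k => [|k IH]; first by rewrite mulr0n edge_boundary10.
by rewrite mulrS mulSn (leq_trans (edge_boundary1D _ _ _)) ?leq_add2l.
Qed.

Lemma edge_boundary_scale_le S Q k :
  (edge_boundary (scale_ms k S) Q <= k * edge_boundary S Q)%N.
Proof.
rewrite !edge_boundaryE big_map big_distrr.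
by apply: leq_sum => s _; apply: edge_boundary1Mn.
Qed.

Lemma edge_boundary_scale S Q k :
  injective (fun x : V => x *+ k) ->
  edge_boundary (scale_ms k S) Q =
  edge_boundary S ((fun x : V => x *+ k) @^-1: Q).
Proof.
move=> inj_k; rewrite !edge_boundaryE big_map; apply: eq_bigr => s _.
rewrite /edge_boundary1 (reindex _ (onW_bij _ (injF_bij inj_k))).
by apply: eq_big => [v|v _]; rewrite inE // -mulrnDl.
Qed.

Lemma cond_set_scale_le S Q k :
  cond_set (scale_ms k S) Q <= k%:R * cond_set S Q.
Proof.
rewrite /cond_set size_map mulrA -natrM ler_wpM2r ?invr_ge0 ?ler0n //.
by rewrite ler_nat edge_boundary_scale_le.
Qed.

Lemma cond_set_scale S Q k :
  injective (fun x : V => x *+ k) ->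
  cond_set (scale_ms k S) Q = cond_set S ((fun x : V => x *+ k) @^-1: Q).
Proof.
by move=> inj_k; rewrite /cond_set size_map edge_boundary_scale ?card_preimset.
Qed.

End EdgeBoundary.

Section Cheeger.
Variable V : finZmodType.
Implicit Types (S : seq V) (Q : {set V}).

Lemma cheeger_le_cond S Q :
  (0 < #|Q|)%N -> (2 * #|Q| <= #|V|)%N -> cheeger S <= cond_set S Q.
Proof. by move=> Q0 QV; apply: bigmin_le_cond; rewrite Q0 QV. Qed.

Lemma cheeger_le1 S : cheeger S <= 1.
Proof. exact: bigmin_le_id. Qed.

Lemma le_mul_cheeger S (c K : rat) : c <= K ->
  (forall Q, (0 < #|Q|)%N -> (2 * #|Q| <= #|V|)%N -> c <= K * cond_set S Q) ->
  c <= K * cheeger S.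
Proof.
move=> cK cQ; apply: (big_ind (fun y => c <= K * y)).
- by rewrite mulr1.
- by move=> x y; rewrite minEle; case: ifP.
- by move=> Q /andP[]; apply: cQ.
Qed.

End Cheeger.

Lemma double_sum_iota1 m : (2 * \sum_(1 <= k < m.+1) k = m * m.+1)%N.
Proof.
elim: m => [|m IH]; first by rewrite big_geq.
by rewrite big_nat_recr //= mulnDr IH; lia.
Qed.

Lemma mulrn_inj (p k : nat) (V : lmodType 'Z_p) :
  (1 < p)%N -> coprime p k -> injective (fun x : V => x *+ k).
Proof.
move=> p_gt1 pk x y /= /(congr1 (fun z => (k%:R : 'Z_p)^-1 *: z)).
by rewrite -!scaler_nat !scalerA mulVr ?unitZpE // !scale1r.
Qed.

Section MultiScale.
Variables (V : finZmodType) (p : nat) (S : seq V).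
Local Notation m := (p.-1)./2.
Local Notation S' := (multi_ms p S).
Implicit Type Q : {set V}.

Lemma cond_set_multi_ms Q :
  cond_set S' Q = m%:R^-1 * \sum_(1 <= k < m.+1) cond_set (scale_ms k S) Q.
Proof.
have size_S' : size S' = (m * size S)%N.
  rewrite /multi_ms size_flatten /shape -map_comp.
  by elim: m 1%N => [|j IH] a //=; rewrite size_map IH.
have boundary_S' :
    edge_boundary S' Q = (\sum_(1 <= k < m.+1) edge_boundary (scale_ms k S) Q)%N.
  rewrite edge_boundaryE big_flatten /= big_map.
  have -> : iota 1 m = index_iota 1 m.+1 by rewrite /index_iota subn1.
  by apply: eq_bigr => k _; rewrite edge_boundaryE.
rewrite /cond_set size_S' boundary_S' natr_sum -mulnA natrM invfM mulrC.
rewrite -mulrA mulr_sumr; congr (_ * _).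
by apply: eq_bigr => k _; rewrite size_map mulrC.
Qed.

Hypothesis m_gt0 : (0 < m)%N.

Lemma cheeger_le_multi_ms :
  (forall k, (0 < k <= m)%N -> injective (fun x : V => x *+ k)) ->
  cheeger S <= cheeger S'.
Proof.
move=> inj_k; rewrite -[cheeger S']mul1r.
apply: le_mul_cheeger => [|Q Q0 QV]; first exact: cheeger_le1.
rewrite mul1r cond_set_multi_ms ler_pdivlMl ?ltr0n //.
have -> : m%:R * cheeger S = \sum_(1 <= k < m.+1) cheeger S.
  by rewrite sumr_const_nat subn1 mulr_natl.
rewrite !big_nat ler_sum // => k /andP[k_gt0 k_le]; rewrite cond_set_scale.
  by apply: cheeger_le_cond; rewrite ?card_preimset //; apply: inj_k; lia.
by apply: inj_k; lia.
Qed.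

Lemma cheeger_multi_ms_le : cheeger S' <= m.+1%:R / 2 * cheeger S.
Proof.
apply: le_mul_cheeger => [|Q Q0 QV].
  by rewrite (le_trans (cheeger_le1 _)) // ler_pdivlMr // mul1r ler_nat; lia.
apply: le_trans (cheeger_le_cond _ Q0 QV) _.
rewrite cond_set_multi_ms ler_pdivrMl ?ltr0n //.
have sum_k : \sum_(1 <= k < m.+1) k%:R = (m * m.+1)%:R / 2 :> rat.
  by rewrite -natr_sum -double_sum_iota1 natrM mulrAC mulfV ?mul1r.
rewrite (le_trans (ler_sum _ (fun k _ => cond_set_scale_le S Q k))) //.
by rewrite -mulr_suml sum_k natrM -!mulrA.
Qed.

End MultiScale.

Theorem lemmaC2 (p n : nat) (S : seq 'rV['Z_p]_n) :
  prime p -> odd p -> (0 < n)%N -> (0 < size S)%N -> symmetric_ms S ->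
  cheeger S <= cheeger (multi_ms p S) /\
  cheeger (multi_ms p S) <= (p.+1)%:R / 4%:R * cheeger S.
Proof.
move=> p_pr p_odd _ _ _.
have p_gt1 := prime_gt1 p_pr.
have p_eq : p = ((p.-1)./2).*2.+1.
  by rewrite -(odd_halfK p_odd) doubleK odd_halfK // prednK //; lia.
have m_gt0 : (0 < (p.-1)./2)%N.
  by move: p_pr; rewrite p_eq; case: (p.-1)./2.
have inj_k k : (0 < k <= (p.-1)./2)%N -> injective (fun x : 'rV['Z_p]_n => x *+ k).
  move=> /andP[k_gt0 k_le]; apply: mulrn_inj; rewrite // prime_coprime //.
  by rewrite gtnNdvd //; lia.
split; first exact: cheeger_le_multi_ms.
have -> : (p.+1)%:R / 4%:R = ((p.-1)./2).+1%:R / 2 :> rat.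
  have -> : p.+1 = (2 * ((p.-1)./2).+1)%N by rewrite [in LHS]p_eq -muln2; lia.
  by rewrite natrM [4%:R](natrM _ 2 2) invfM mulrACA mulfV ?mul1r.
exact: cheeger_multi_ms_le.
Qed.
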